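(* Let $\phi(t,x)=(2\pi)^{-1/2}\int_{\mathbb{R}} e^{i(kx-\hbar k^2t/(2m))}\varphi(k)\,dk$ be a freely evolving wave packet, where $\varphi\in C^1(\mathbb{R})$ has $\mathrm{supp}\,\varphi\subseteq[a_1,a_2]$ with $0<a_1<a_2$. Let $j(t,x)=\frac{\hbar}{m}\mathrm{Im}\big(\overline{\phi(t,x)}\,\partial_x\phi(t,x)\big)$ be its probability current density. Then for every fixed $\tau\in\mathbb{R}$, \[ \lim_{M\to\infty}\int_{-M}^{\tau} j(s,M)\,ds=0 . \]
   Context: $\hbar,m>0$ are constants; $\phi$ is the solution of the free Schrödinger equation $i\hbar\partial_t\phi=-\frac{\hbar^2}{2m}\partial_x^2\phi$ with initial Fourier transform $\varphi$. *)

From Stdlib Require Import Reals.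
From Coquelicot Require Export Coquelicot.
Open Scope R_scope.

Definition phase (hbar m t x k : R) : R := k * x - hbar * k ^ 2 * t / (2 * m).

Definition cexpi (theta : R) : C := (cos theta, sin theta).

Definition phi (hbar m : R) (vphi : R -> C) (t x : R) : C :=
  Cmult (RtoC (/ sqrt (2 * PI)))
    (@RInt_gen C_R_CompleteNormedModule (fun k => Cmult (cexpi (phase hbar m t x k)) (vphi k))
       (Rbar_locally m_infty) (Rbar_locally p_infty)).

Definition dx_phi (hbar m : R) (vphi : R -> C) (t x : R) : C :=
  (Derive (fun y => Re (phi hbar m vphi t y)) x,
   Derive (fun y => Im (phi hbar m vphi t y)) x).

Definition current (hbar m : R) (vphi : R -> C) (t x : R) : R :=
  hbar / m * Im (Cmult (Cconj (phi hbar m vphi t x)) (dx_phi hbar m vphi t x)).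

From Stdlib Require Import Reals Lra.
From Coquelicot Require Import Coquelicot.
Open Scope R_scope.

(** The Fourier transform varphi lives on [a1, a2] with a1 > 0, so for k in its support the
    k-derivative [x - hbar k s / m] of the phase of phi(s, x) is at least [x / 2] whenever
    s <= tau and x is large.  One integration by parts in k then gives phi(s, x) = O(1/x), and
    likewise d_x phi(s, x) = O(1/x) (it is the same kind of integral, with weight i k varphi(k)),
    uniformly for s in [-x, tau].  Hence j(s, x) = O(1/x^2) there, and its integral over
    [-x, tau], an interval of length O(x), is O(1/x). *)

Lemma continuous_Rplus (f g : R -> R) (x : R) :
  continuous f x -> continuous g x -> continuous (fun y => f y + g y) x.
Proof. apply (@continuous_plus R_UniformSpace R_AbsRing R_NormedModule). Qed.

Lemma continuous_Rminus (f g : R -> R) (x : R) :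
  continuous f x -> continuous g x -> continuous (fun y => f y - g y) x.
Proof. apply (@continuous_minus R_UniformSpace R_AbsRing R_NormedModule). Qed.

Lemma continuous_Ropp (f : R -> R) (x : R) :
  continuous f x -> continuous (fun y => - f y) x.
Proof. apply (@continuous_opp R_UniformSpace R_AbsRing R_NormedModule). Qed.

Lemma continuous_Rmult (f g : R -> R) (x : R) :
  continuous f x -> continuous g x -> continuous (fun y => f y * g y) x.
Proof. apply (@continuous_mult R_UniformSpace R_AbsRing). Qed.

Lemma continuous_of_is_derive (f f' : R -> R) (x : R) : is_derive f x (f' x) -> continuous f x.
Proof. intro H. apply (@ex_derive_continuous R_AbsRing R_NormedModule). now exists (f' x). Qed.

Lemma is_derive_opp_sin (x : R) : is_derive (fun z => - sin z) x (- cos x).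
Proof. auto_derive; auto. ring. Qed.

Lemma is_derive_opp_cos (x : R) : is_derive (fun z => - cos z) x (sin x).
Proof. auto_derive; auto. ring. Qed.

Local Hint Resolve continuous_Ropp continuous_sin continuous_cos
  is_derive_sin is_derive_cos is_derive_opp_sin is_derive_opp_cos : core.

Lemma is_derive_Re (f : R -> C) (x : R) (l : C) :
  @is_derive R_AbsRing C_R_NormedModule f x l -> is_derive (fun y => Re (f y)) x (Re l).
Proof.
  intro H. apply (filterdiff_comp f fst (fun y => scal y l) fst H).
  apply filterdiff_linear, is_linear_fst.
Qed.

Lemma is_derive_Im (f : R -> C) (x : R) (l : C) :
  @is_derive R_AbsRing C_R_NormedModule f x l -> is_derive (fun y => Im (f y)) x (Im l).
Proof.
  intro H. apply (filterdiff_comp f snd (fun y => scal y l) snd H).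
  apply filterdiff_linear, is_linear_snd.
Qed.

Lemma continuous_bounded_on_segment (f : R -> R) (a b : R) :
  a <= b -> (forall k, continuous f k) ->
  exists B, 0 <= B /\ forall k, a <= k <= b -> Rabs (f k) <= B.
Proof.
  intros Hab Hc.
  destruct (continuity_ab_maj (fun k => Rabs (f k)) a b Hab) as [x [Hx _]].
  { intros c _. apply continuity_pt_filterlim, continuous_Rabs_comp, Hc. }
  exists (Rabs (f x)). split; [apply Rabs_pos | exact Hx].
Qed.

Lemma continuous_vanishing_left (f : R -> R) (a : R) :
  continuous f a -> (forall k, k < a -> f k = 0) -> f a = 0.
Proof.
  intros Hc Hz.
  apply (@filterlim_locally_unique R R_AbsRing R_NormedModule (at_left a) _ f).
  - eapply filterlim_filter_le_1; [apply filter_le_within | exact Hc].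
  - apply filterlim_ext_loc with (f := fun _ => 0); [|apply filterlim_const].
    exists (mkposreal 1 Rlt_0_1). intros y _ Hy. symmetry. apply Hz, Hy.
Qed.

Lemma continuous_vanishing_right (f : R -> R) (a : R) :
  continuous f a -> (forall k, a < k -> f k = 0) -> f a = 0.
Proof.
  intros Hc Hz.
  apply (@filterlim_locally_unique R R_AbsRing R_NormedModule (at_right a) _ f).
  - eapply filterlim_filter_le_1; [apply filter_le_within | exact Hc].
  - apply filterlim_ext_loc with (f := fun _ => 0); [|apply filterlim_const].
    exists (mkposreal 1 Rlt_0_1). intros y _ Hy. symmetry. apply Hz, Hy.
Qed.

Lemma RInt_parts_vanishing (F F' G G' : R -> R) (a b : R) :
  a <= b ->
  (forall k, a <= k <= b -> is_derive F k (F' k)) ->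
  (forall k, a <= k <= b -> is_derive G k (G' k)) ->
  (forall k, a <= k <= b -> continuous F' k) ->
  (forall k, a <= k <= b -> continuous G' k) ->
  F a * G a = 0 -> F b * G b = 0 ->
  RInt (fun k => F' k * G k) a b = - RInt (fun k => F k * G' k) a b.
Proof.
  intros Hab HF HG HF' HG' Ha Hb.
  assert (Hseg : forall k, Rmin a b <= k <= Rmax a b -> a <= k <= b)
    by (intro k; rewrite Rmin_left, Rmax_right by lra; easy).
  assert (HFc : forall k, a <= k <= b -> continuous F k)
    by (intros; apply (continuous_of_is_derive F F'); auto).
  assert (HGc : forall k, a <= k <= b -> continuous G k)
    by (intros; apply (continuous_of_is_derive G G'); auto).
  assert (Hex1 : ex_RInt (fun k => F' k * G k) a b).
  { apply (@ex_RInt_continuous R_CompleteNormedModule).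
    intros k Hk%Hseg. apply continuous_Rmult; auto. }
  assert (Hex2 : ex_RInt (fun k => F k * G' k) a b).
  { apply (@ex_RInt_continuous R_CompleteNormedModule).
    intros k Hk%Hseg. apply continuous_Rmult; auto. }
  assert (Hprod : is_RInt (fun k => F' k * G k + F k * G' k) a b (F b * G b - F a * G a)).
  { apply (is_RInt_derive (fun k => F k * G k)); intros k Hk%Hseg.
    - apply (is_derive_mult F G); auto. apply Rmult_comm.
    - apply continuous_Rplus; apply continuous_Rmult; auto. }
  apply (is_RInt_unique (V := R_CompleteNormedModule)) in Hprod.
  pose proof (RInt_plus _ _ _ _ Hex1 Hex2) as Hsum. unfold plus in Hsum; simpl in Hsum.
  rewrite Hsum in Hprod. lra.
Qed.

Lemma Rabs_quotient_rule_le (p p' d d' W0 W1 L : R) :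
  0 < L <= d -> Rabs p <= W0 -> Rabs p' <= W1 ->
  Rabs ((p' * d - p * d') / d ^ 2) <= W1 / L + W0 * Rabs d' / L ^ 2.
Proof.
  intros [HL HLd] Hp Hp'.
  replace ((p' * d - p * d') / d ^ 2) with (p' * / d + - (p * d' * / d ^ 2)) by (field; lra).
  eapply Rle_trans; [apply Rabs_triang |]. rewrite Rabs_Ropp, !Rabs_mult, !Rabs_inv.
  rewrite (Rabs_right d), (Rabs_right (d ^ 2)) by (apply Rle_ge, pow_le || idtac; lra).
  apply Rplus_le_compat.
  - apply Rmult_le_compat; try apply Rabs_pos; [left; apply Rinv_0_lt_compat; lra | auto |].
    apply Rinv_le_contravar; lra.
  - unfold Rdiv. apply Rmult_le_compat.
    + apply Rmult_le_pos; apply Rabs_pos.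
    + left; apply Rinv_0_lt_compat, pow_lt; lra.
    + apply Rmult_le_compat_r; [apply Rabs_pos | auto].
    + apply Rinv_le_contravar; [apply pow_lt; lra | apply pow_incr; lra].
Qed.

Lemma RInt_quadratic_phase_bound (h g w w' : R -> R) (x c a b L W0 W1 : R) :
  a <= b -> 0 < L ->
  (forall z, is_derive g z (h z)) -> (forall z, continuous h z) -> (forall z, Rabs (g z) <= 1) ->
  (forall k, is_derive w k (w' k)) -> (forall k, continuous w' k) -> w a = 0 -> w b = 0 ->
  (forall k, a <= k <= b -> L <= x + 2 * c * k) ->
  (forall k, a <= k <= b -> Rabs (w k) <= W0) ->
  (forall k, a <= k <= b -> Rabs (w' k) <= W1) ->
  Rabs (RInt (fun k => h (x * k + c * k ^ 2) * w k) a b)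
    <= (b - a) * (W1 / L + W0 * Rabs (2 * c) / L ^ 2).
Proof.
  intros Hab HL Hg Hh Hg1 Hw Hw' Wa Wb Hslope HW0 HW1.
  set (theta := fun k => x * k + c * k ^ 2).
  set (slope := fun k => x + 2 * c * k).
  set (quot' := fun k => (w' k * slope k - w k * (2 * c)) / slope k ^ 2).
  assert (Hslope_pos : forall k, a <= k <= b -> 0 < slope k)
    by (intros k Hk; specialize (Hslope k Hk); unfold slope; lra).
  assert (Htheta : forall k, is_derive theta k (slope k))
    by (intro k; unfold theta, slope; auto_derive; auto; ring).
  assert (Htheta_cont : forall k, continuous theta k)
    by (intro k; apply (continuous_of_is_derive theta slope); auto).
  assert (Hslope_cont : forall k, continuous slope k)
    by (intro k; apply (ex_derive_continuous slope); unfold slope; auto_derive; auto).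
  assert (Hw_cont : forall k, continuous w k)
    by (intro k; apply (continuous_of_is_derive w w'); auto).
  assert (Hquot'_cont : forall k, a <= k <= b -> continuous quot' k).
  { intros k Hk. specialize (Hslope_pos k Hk). unfold quot', Rdiv.
    apply continuous_Rmult.
    - apply continuous_Rminus; apply continuous_Rmult; auto. apply continuous_const.
    - apply (ex_derive_continuous (fun k => / slope k ^ 2)). unfold slope in *.
      auto_derive. intro Hz. nra. }
  (* [h(theta) w = (g o theta)' * (w / theta')], and [w / theta'] vanishes at [a] and [b] *)
  rewrite (RInt_ext _ (fun k => (h (theta k) * slope k) * (w k / slope k))).
  2:{ intros k Hk. rewrite Rmin_left, Rmax_right in Hk by lra.
      assert (0 < slope k) by (apply Hslope_pos; lra).
      change (h (theta k) * w k = h (theta k) * slope k * (w k / slope k)). field. lra. }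
  rewrite (RInt_parts_vanishing (fun k => g (theta k)) _ (fun k => w k / slope k) quot'); auto.
  - rewrite Rabs_Ropp. apply abs_RInt_le_const; auto.
    + apply (@ex_RInt_continuous R_CompleteNormedModule). intros k Hk.
      rewrite Rmin_left, Rmax_right in Hk by lra.
      apply continuous_Rmult; [apply (continuous_comp theta g) | apply Hquot'_cont]; auto.
      apply (continuous_of_is_derive g h); auto.
    + intros k Hk. rewrite Rabs_mult, <- (Rmult_1_l (_ + _)).
      apply Rmult_le_compat; try apply Rabs_pos; auto.
      apply Rabs_quotient_rule_le; auto. split; [lra | apply Hslope; auto].
  - intros k _. replace (h (theta k) * slope k) with (scal (slope k) (h (theta k)))
      by apply Rmult_comm.
    apply (is_derive_comp g theta); auto.
  - intros k Hk. apply (is_derive_div w slope); auto.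
    + unfold slope. auto_derive; auto. ring.
    + apply Rgt_not_eq, Hslope_pos; auto.
  - intros k _. apply continuous_Rmult; [apply (continuous_comp theta h) |]; auto.
  - rewrite Wa. unfold Rdiv. ring.
  - rewrite Wb. unfold Rdiv. ring.
Qed.

Lemma continuity_2d_pt_affine_comp (h al be w : R -> R) (x y : R) :
  (forall z, continuous h z) -> (forall k, continuous al k) -> (forall k, continuous be k) ->
  (forall k, continuous w k) ->
  continuity_2d_pt (fun u k => h (al k * u + be k) * w k) x y.
Proof.
  intros Hh Hal Hbe Hw.
  apply continuity_2d_pt_filterlim.
  change (continuous (fun z : R * R =>
    mult (h (plus (mult (al (snd z)) (fst z)) (be (snd z)))) (w (snd z))) (x, y)).
  apply (@continuous_mult (prod_UniformSpace R_UniformSpace R_UniformSpace) R_AbsRing).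
  - apply continuous_comp
      with (f := fun z : R * R => plus (mult (al (snd z)) (fst z)) (be (snd z))); [|apply Hh].
    apply (@continuous_plus (prod_UniformSpace R_UniformSpace R_UniformSpace) R_AbsRing).
    + apply (@continuous_mult (prod_UniformSpace R_UniformSpace R_UniformSpace) R_AbsRing).
      * apply continuous_comp with (f := snd); [apply continuous_snd | apply Hal].
      * apply continuous_fst.
    + apply continuous_comp with (f := snd); [apply continuous_snd | apply Hbe].
  - apply continuous_comp with (f := snd); [apply continuous_snd | apply Hw].
Qed.

Lemma is_derive_RInt_affine_param (h h' al be w : R -> R) (a b y : R) :
  (forall z, is_derive h z (h' z)) -> (forall z, continuous h' z) ->
  (forall k, continuous al k) -> (forall k, continuous be k) -> (forall k, continuous w k) ->
  is_derive (fun y => RInt (fun k => h (al k * y + be k) * w k) a b) y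
    (RInt (fun k => h' (al k * y + be k) * (al k * w k)) a b).
Proof.
  intros Hh' Hc' Hal Hbe Hw.
  assert (Hh : forall z, continuous h z) by (intro z; apply (continuous_of_is_derive h h'); auto).
  assert (Hpt : forall u k, is_derive (fun z => h (al k * z + be k) * w k) u
                              (h' (al k * u + be k) * (al k * w k))).
  { intros u k. rewrite <- Rmult_assoc, (Rmult_comm _ (al k)).
    apply (is_derive_scal_l (fun z => h (al k * z + be k)) u _ (w k)).
    apply (is_derive_comp h (fun z => al k * z + be k)); auto.
    auto_derive; auto; ring. }
  rewrite (RInt_ext _ (fun k => Derive (fun z => h (al k * z + be k) * w k) y))
    by (intros; symmetry; apply is_derive_unique, Hpt).
  apply (is_derive_RInt_param (fun y k => h (al k * y + be k) * w k)).
  - apply filter_forall. intros u k _. eexists. apply Hpt.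
  - intros k _.
    apply continuity_2d_pt_ext with (f := fun u k => h' (al k * u + be k) * (al k * w k)).
    + intros; symmetry; apply is_derive_unique, Hpt.
    + apply continuity_2d_pt_affine_comp; auto. intro; apply continuous_Rmult; auto.
  - apply filter_forall. intros u. apply (@ex_RInt_continuous R_CompleteNormedModule). intros k _.
    apply continuous_Rmult; auto. apply (continuous_comp (fun k => al k * u + be k) h); auto.
    apply continuous_Rplus; auto. apply continuous_Rmult; auto. apply continuous_const.
Qed.

Lemma is_RInt_gen_zero {V : NormedModule R_AbsRing} (Fa Fb : (R -> Prop) -> Prop)
  {FFa : Filter Fa} {FFb : Filter Fb} :
  is_RInt_gen (fun _ : R => @zero V) Fa Fb zero.
Proof.
  intros P HP. unfold filtermapi. apply (@filter_forall _ (filter_prod Fa Fb) _).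
  intros ab. exists zero. split.
  - pose proof (@is_RInt_const V (fst ab) (snd ab) zero) as H.
    rewrite (@scal_zero_r R_Ring (NormedModule.ModuleSpace R_AbsRing V)) in H. exact H.
  - apply locally_singleton, HP.
Qed.

Lemma RInt_gen_supported (f : R -> C) (a b : R) :
  a <= b -> (forall k, k < a \/ b < k -> f k = zero) -> @ex_RInt C_R_NormedModule f a b ->
  @RInt_gen C_R_CompleteNormedModule f (Rbar_locally m_infty) (Rbar_locally p_infty)
  = @RInt C_R_CompleteNormedModule f a b.
Proof.
  intros Hab Hz Hex.
  apply is_RInt_gen_unique.
  replace (@RInt C_R_CompleteNormedModule f a b)
    with (@plus C_AbelianMonoid zero (plus (@RInt C_R_CompleteNormedModule f a b) zero))
    by (rewrite plus_zero_r, plus_zero_l; reflexivity).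
  apply (@is_RInt_gen_Chasles C_R_NormedModule _ _ _ _ f a).
  - apply (@is_RInt_gen_ext C_R_NormedModule _ _ _ _ (fun _ => zero));
      [|exact (@is_RInt_gen_zero C_R_NormedModule _ _ _ _)].
    apply Filter_prod with (Q := fun x => x < a) (R := fun y => y = a);
      [exists a; auto | reflexivity |].
    intros x y Hx Hy t Ht. simpl in Ht. subst y. symmetry. apply Hz. left.
    rewrite Rmax_right in Ht by lra. lra.
  - apply (@is_RInt_gen_Chasles C_R_NormedModule _ _ _ _ f b).
    + apply is_RInt_gen_at_point, (@RInt_correct C_R_CompleteNormedModule), Hex.
    + apply (@is_RInt_gen_ext C_R_NormedModule _ _ _ _ (fun _ => zero));
        [|exact (@is_RInt_gen_zero C_R_NormedModule _ _ _ _)].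
      apply Filter_prod with (Q := fun y => y = b) (R := fun x => b < x);
        [reflexivity | exists b; auto |].
      intros x y Hx Hy t Ht. simpl in Ht. subst x. symmetry. apply Hz. right.
      rewrite Rmin_left in Ht by lra. lra.
Qed.

Lemma is_lim_RInt_inverse_square (f : R -> R -> R) (tau C M0 : R) :
  (forall M, ex_RInt (fun s => f s M) (- M) tau) ->
  (forall M s, M0 <= M -> - M <= s <= tau -> Rabs (f s M) <= C / M ^ 2) ->
  is_lim (fun M => RInt (fun s => f s M) (- M) tau) p_infty 0.
Proof.
  intros Hex Hbound.
  set (D := 2 * Rabs C).
  assert (Hlim : is_lim (fun M => D * / M) p_infty 0).
  { replace (Finite 0) with (Rbar_mult D (Rbar_inv p_infty)) by (simpl; f_equal; ring).
    apply is_lim_scal_l, is_lim_inv; [apply is_lim_id | discriminate]. }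
  apply (is_lim_le_le_loc (fun M => - (D * / M)) (fun M => D * / M)); [| | exact Hlim].
  2:{ replace (Finite 0) with (Rbar_opp 0) by (simpl; f_equal; ring). now apply is_lim_opp. }
  exists (Rmax M0 (Rabs tau + 1)). intros M HM.
  pose proof (Rmax_l M0 (Rabs tau + 1)). pose proof (Rmax_r M0 (Rabs tau + 1)).
  pose proof (Rle_abs tau). pose proof (Rle_abs (- tau)). rewrite Rabs_Ropp in *.
  assert (HC : 0 <= C / M ^ 2)
    by (apply Rle_trans with (Rabs (f tau M)); [apply Rabs_pos | apply Hbound; lra]).
  apply Rabs_le_between. apply Rle_trans with ((tau - - M) * (C / M ^ 2)).
  - apply abs_RInt_le_const; [lra | apply Hex | intros s Hs; apply Hbound; lra].
  - apply Rle_trans with (2 * M * (C / M ^ 2)); [apply Rmult_le_compat_r; lra |].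
    unfold D. rewrite Rabs_right.
    + right. field. lra.
    + apply Rle_ge. replace C with (C / M ^ 2 * M ^ 2) by (field; lra).
      apply Rmult_le_pos; [lra | apply pow2_ge_0].
Qed.

Lemma Rabs_cross_le (x1 y1 x2 y2 q : R) :
  Rabs x1 <= q -> Rabs y1 <= q -> Rabs x2 <= q -> Rabs y2 <= q ->
  Rabs (x1 * y1 - x2 * y2) <= 2 * q ^ 2.
Proof.
  intros H1 H2 H3 H4.
  eapply Rle_trans; [apply Rabs_triang |]. rewrite Rabs_Ropp, !Rabs_mult.
  pose proof (Rabs_pos x1). pose proof (Rabs_pos y1).
  pose proof (Rabs_pos x2). pose proof (Rabs_pos y2).
  assert (Rabs x1 * Rabs y1 <= q * q) by (apply Rmult_le_compat; auto).
  assert (Rabs x2 * Rabs y2 <= q * q) by (apply Rmult_le_compat; auto).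
  simpl. lra.
Qed.

Definition C1_vanishing_ends (a b : R) (w : R -> R) : Prop :=
  exists w', (forall k, is_derive w k (w' k)) /\ (forall k, continuous w' k) /\ w a = 0 /\ w b = 0.

Lemma C1_vanishing_ends_continuous (a b : R) (w : R -> R) :
  C1_vanishing_ends a b w -> forall k, continuous w k.
Proof. intros [w' [Hw _]] k. apply (continuous_of_is_derive w w'), Hw. Qed.

Lemma C1_vanishing_ends_of_support (a b : R) (w w' : R -> R) :
  (forall k, is_derive w k (w' k)) -> (forall k, continuous w' k) ->
  (forall k, k < a \/ b < k -> w k = 0) -> C1_vanishing_ends a b w.
Proof.
  intros Hw Hw' Hz. exists w'.
  assert (Hc : forall k, continuous w k) by (intro k; apply (continuous_of_is_derive w w'), Hw).
  split; [|split; [|split]]; auto.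
  - apply continuous_vanishing_left; auto.
  - apply continuous_vanishing_right; auto.
Qed.

Lemma C1_vanishing_ends_opp (a b : R) (w : R -> R) :
  C1_vanishing_ends a b w -> C1_vanishing_ends a b (fun k => - w k).
Proof.
  intros [w' (Hw & Hw' & Wa & Wb)]. exists (fun k => - w' k). split; [|split; [|split]].
  - intro k. apply (@is_derive_opp R_AbsRing R_NormedModule), Hw.
  - intro k. apply continuous_Ropp, Hw'.
  - now rewrite Wa, Ropp_0.
  - now rewrite Wb, Ropp_0.
Qed.

Lemma C1_vanishing_ends_mul_id (a b : R) (w : R -> R) :
  C1_vanishing_ends a b w -> C1_vanishing_ends a b (fun k => k * w k).
Proof.
  intros [w' (Hw & Hw' & Wa & Wb)]. exists (fun k => w k + k * w' k). split; [|split; [|split]].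
  - intro k. replace (w k + k * w' k) with (plus (mult 1 (w k)) (mult k (w' k)))
      by (unfold plus, mult; simpl; ring).
    apply (is_derive_mult (fun k => k) w);
      [apply (@is_derive_id R_AbsRing) | apply Hw | apply Rmult_comm].
  - intro k. apply continuous_Rplus; [apply (continuous_of_is_derive w w'), Hw |].
    apply continuous_Rmult; [apply continuous_id | apply Hw'].
  - rewrite Wa. ring.
  - rewrite Wb. ring.
Qed.

Section Oscillatory.

Variables hbar m a b : R.

Definition osc (h w : R -> R) (t x : R) : R :=
  RInt (fun k => h (phase hbar m t x k) * w k) a b.

Lemma is_RInt_osc (h w : R -> R) (t x : R) :
  (forall z, continuous h z) -> (forall k, continuous w k) ->
  is_RInt (fun k => h (phase hbar m t x k) * w k) a b (osc h w t x).
Proof.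
  intros Hh Hw. apply (RInt_correct (V := R_CompleteNormedModule)).
  apply (@ex_RInt_continuous R_CompleteNormedModule). intros k _.
  apply continuous_Rmult; auto. apply (continuous_comp (phase hbar m t x) h); auto.
  apply (ex_derive_continuous (phase hbar m t x)). unfold phase. auto_derive. auto.
Qed.

Lemma is_derive_osc_x (h h' w : R -> R) (t x : R) :
  (forall z, is_derive h z (h' z)) -> (forall z, continuous h' z) -> (forall k, continuous w k) ->
  is_derive (fun y => osc h w t y) x (osc h' (fun k => k * w k) t x).
Proof.
  intros Hh' Hc' Hw. unfold osc.
  assert (Hphase : forall y k, phase hbar m t y k = k * y + - (hbar * k ^ 2 * t / (2 * m)))
    by (intros; unfold phase; ring).
  apply (is_derive_ext
    (fun y => RInt (fun k => h (k * y + - (hbar * k ^ 2 * t / (2 * m))) * w k) a b)).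
  { intro y. apply RInt_ext. intros k _. now rewrite Hphase. }
  rewrite (RInt_ext _ (fun k => h' (k * x + - (hbar * k ^ 2 * t / (2 * m))) * (k * w k)))
    by (intros; now rewrite Hphase).
  apply (is_derive_RInt_affine_param h h' (fun k => k)); auto.
  - intro k. apply continuous_id.
  - intro k. apply (ex_derive_continuous (fun k => - (hbar * k ^ 2 * t / (2 * m)))).
    auto_derive. auto.
Qed.

Lemma continuous_osc_t (h h' w : R -> R) (t x : R) :
  (forall z, is_derive h z (h' z)) -> (forall z, continuous h' z) -> (forall k, continuous w k) ->
  continuous (fun s => osc h w s x) t.
Proof.
  intros Hh' Hc' Hw. unfold osc.
  apply (ex_derive_continuous (V := R_NormedModule)).
  apply (ex_derive_ext
    (fun s => RInt (fun k => h (- (hbar * k ^ 2 / (2 * m)) * s + k * x) * w k) a b)).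
  { intro s. apply RInt_ext. intros k _. unfold phase. f_equal. f_equal. unfold Rdiv. ring. }
  eexists. apply (is_derive_RInt_affine_param h h'); auto.
  - intro k. apply (ex_derive_continuous (fun k => - (hbar * k ^ 2 / (2 * m)))). auto_derive. auto.
  - intro k. apply (ex_derive_continuous (fun k => k * x)). auto_derive. auto.
Qed.

Lemma osc_opp_swap (h w : R -> R) (t x : R) :
  osc (fun z => - h z) w t x = osc h (fun k => - w k) t x.
Proof. apply RInt_ext. intros k _. simpl. ring. Qed.

(* [wave u v t x] is the integral over [a, b] of [exp (i phase) (u + i v)] *)
Definition wave (u v : R -> R) (t x : R) : C :=
  (osc cos u t x + osc (fun z => - sin z) v t x, osc cos v t x + osc sin u t x).

Lemma is_derive_wave_x (u v : R -> R) (t x : R) :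
  (forall k, continuous u k) -> (forall k, continuous v k) ->
  let w := wave (fun k => - (k * v k)) (fun k => k * u k) t x in
  is_derive (fun y => Re (wave u v t y)) x (Re w) /\
  is_derive (fun y => Im (wave u v t y)) x (Im w).
Proof.
  intros Hu Hv. simpl. split.
  - rewrite <- (osc_opp_swap cos (fun k => k * v k)), Rplus_comm.
    apply (@is_derive_plus R_AbsRing R_NormedModule); apply is_derive_osc_x; auto.
  - rewrite <- (osc_opp_swap sin (fun k => k * v k)), Rplus_comm.
    apply (@is_derive_plus R_AbsRing R_NormedModule); apply is_derive_osc_x; auto.
Qed.

Lemma continuous_wave_t (u v : R -> R) (t x : R) :
  (forall k, continuous u k) -> (forall k, continuous v k) ->
  continuous (fun s => Re (wave u v s x)) t /\ continuous (fun s => Im (wave u v s x)) t.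
Proof.
  intros Hu Hv. simpl. split; apply continuous_Rplus.
  - apply (continuous_osc_t cos (fun z => - sin z)); auto.
  - apply (continuous_osc_t (fun z => - sin z) (fun z => - cos z)); auto.
  - apply (continuous_osc_t cos (fun z => - sin z)); auto.
  - apply (continuous_osc_t sin cos); auto.
Qed.

Variable tau : R.
Hypotheses (hbar_gt0 : 0 < hbar) (m_gt0 : 0 < m) (a_gt0 : 0 < a) (a_le_b : a <= b).

Definition threshold : R := 1 + Rabs tau + 2 * hbar * b * Rabs tau / m.

Lemma threshold_ge_1_abs_tau : 1 + Rabs tau <= threshold.
Proof.
  unfold threshold. assert (0 <= 2 * hbar * b * Rabs tau / m); [|lra].
  pose proof (Rabs_pos tau).
  apply Rmult_le_pos; [repeat apply Rmult_le_pos | left; apply Rinv_0_lt_compat]; lra.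
Qed.

Lemma phase_slope_ge_half (M s k : R) :
  threshold <= M -> - M <= s <= tau -> a <= k <= b ->
  M / 2 <= M + 2 * - (hbar * s / (2 * m)) * k.
Proof.
  intros HM Hs Hk. unfold threshold in HM.
  pose proof (Rle_abs tau). pose proof (Rabs_pos tau).
  assert (Hsk : s * k <= b * Rabs tau).
  { destruct (Rle_or_lt s 0).
    - assert (s * k <= 0) by nra. assert (0 <= b * Rabs tau) by nra. lra.
    - apply Rle_trans with (Rabs tau * k); [apply Rmult_le_compat_r; lra | nra]. }
  apply (Rmult_le_compat_l hbar) in Hsk; [|lra]. rewrite <- !Rmult_assoc in Hsk.
  assert (Hskm : hbar * s * k / m <= hbar * b * Rabs tau / m)
    by (apply Rmult_le_compat_r; [left; apply Rinv_0_lt_compat |]; lra).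
  replace (M + 2 * - (hbar * s / (2 * m)) * k) with (M - hbar * s * k / m) by (field; lra).
  replace (2 * hbar * b * Rabs tau / m) with (2 * (hbar * b * Rabs tau / m)) in HM by (field; lra).
  lra.
Qed.

Lemma osc_decay (w : R -> R) :
  C1_vanishing_ends a b w ->
  exists K, forall h g : R -> R,
    (forall z, is_derive g z (h z)) -> (forall z, continuous h z) -> (forall z, Rabs (g z) <= 1) ->
    forall M s, threshold <= M -> - M <= s <= tau -> Rabs (osc h w s M) <= K / M.
Proof.
  intros [w' (Hw & Hw' & Wa & Wb)].
  assert (Hwc : forall k, continuous w k) by (intro k; apply (continuous_of_is_derive w w'); auto).
  destruct (continuous_bounded_on_segment w a b a_le_b Hwc) as [W0 [HW0 HW0b]].
  destruct (continuous_bounded_on_segment w' a b a_le_b Hw') as [W1 [HW1 HW1b]].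
  exists ((b - a) * (2 * W1 + 4 * W0 * hbar / m)).
  intros h g Hg Hh Hg1 M s HM Hs.
  pose proof threshold_ge_1_abs_tau. pose proof (Rle_abs tau). pose proof (Rabs_pos tau).
  assert (HMpos : 0 < M) by lra.
  assert (Habs : Rabs s <= M) by (apply Rabs_le; lra).
  unfold osc.
  rewrite (RInt_ext _ (fun k => h (M * k + - (hbar * s / (2 * m)) * k ^ 2) * w k))
    by (intros; unfold phase; f_equal; f_equal; field; lra).
  eapply Rle_trans.
  { apply (RInt_quadratic_phase_bound h g w w' M _ a b (M / 2) W0 W1); auto; try lra.
    intros k Hk. apply phase_slope_ge_half; auto. }
  replace (Rabs (2 * - (hbar * s / (2 * m)))) with (hbar / m * Rabs s).
  2:{ replace (2 * - (hbar * s / (2 * m))) with (- (hbar / m * s)) by (field; lra).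
      rewrite Rabs_Ropp, Rabs_mult, (Rabs_right (hbar / m)); [reflexivity |].
      apply Rle_ge, Rlt_le, Rdiv_lt_0_compat; lra. }
  apply Rle_trans with ((b - a) * (2 * W1 + 4 * W0 * hbar / m) / M
                       - (b - a) * (4 * W0 * (hbar / m)) * (M - Rabs s) / M ^ 2);
    [right; field; lra |].
  assert (0 <= (b - a) * (4 * W0 * (hbar / m)) * (M - Rabs s) / M ^ 2); [|lra].
  apply Rmult_le_pos; [|left; apply Rinv_0_lt_compat, pow_lt; lra].
  repeat apply Rmult_le_pos; try lra. left; apply Rinv_0_lt_compat; lra.
Qed.

Lemma wave_decay (u v : R -> R) :
  C1_vanishing_ends a b u -> C1_vanishing_ends a b v ->
  exists K, forall M s, threshold <= M -> - M <= s <= tau ->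
    Rabs (Re (wave u v s M)) <= K / M /\ Rabs (Im (wave u v s M)) <= K / M.
Proof.
  intros Hu Hv.
  destruct (osc_decay u Hu) as [Ku HKu]. destruct (osc_decay v Hv) as [Kv HKv].
  assert (Bsin : forall z, Rabs (sin z) <= 1) by (intro z; apply Rabs_le, SIN_bound).
  assert (Bcos : forall z, Rabs (cos z) <= 1) by (intro z; apply Rabs_le, COS_bound).
  assert (Bmcos : forall z, Rabs (- cos z) <= 1) by (intro z; rewrite Rabs_Ropp; auto).
  exists (Ku + Kv). intros M s HM Hs.
  assert (HMpos : 0 < M) by (pose proof threshold_ge_1_abs_tau; pose proof (Rabs_pos tau); lra).
  replace ((Ku + Kv) / M) with (Ku / M + Kv / M) by (field; lra).
  simpl. split; eapply Rle_trans; try apply Rabs_triang.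
  - apply Rplus_le_compat; [apply (HKu cos sin) | apply (HKv (fun z => - sin z) cos)]; auto.
  - rewrite Rplus_comm.
    apply Rplus_le_compat; [apply (HKu sin (fun z => - cos z)) | apply (HKv cos sin)]; auto.
Qed.

End Oscillatory.

Section WavePacket.

Variables (hbar m a b : R) (vphi dvphi : R -> C).
Hypothesis a_le_b : a <= b.
Hypothesis vphi_derive : forall k, @is_derive R_AbsRing C_R_NormedModule vphi k (dvphi k).
Hypothesis dvphi_continuous : forall k, @continuous R_UniformSpace C_R_NormedModule dvphi k.
Hypothesis vphi_support : forall k, k < a \/ b < k -> vphi k = 0%C.

Let c0 : R := / sqrt (2 * PI).
Let u (k : R) : R := Re (vphi k).
Let v (k : R) : R := Im (vphi k).
Let psi : R -> R -> C := wave hbar m a b u v.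
(* the weights of [dpsi] are the real and imaginary parts of [i k vphi(k)] *)
Let dpsi : R -> R -> C := wave hbar m a b (fun k => - (k * v k)) (fun k => k * u k).

Lemma C1_vanishing_ends_Re_vphi : C1_vanishing_ends a b u.
Proof.
  apply (C1_vanishing_ends_of_support a b u (fun k => Re (dvphi k))).
  - intro k. apply is_derive_Re, vphi_derive.
  - intro k. apply (continuous_comp dvphi fst); auto.
    apply (@continuous_fst R_UniformSpace R_UniformSpace).
  - intros k Hk. unfold u. now rewrite vphi_support.
Qed.

Lemma C1_vanishing_ends_Im_vphi : C1_vanishing_ends a b v.
Proof.
  apply (C1_vanishing_ends_of_support a b v (fun k => Im (dvphi k))).
  - intro k. apply is_derive_Im, vphi_derive.
  - intro k. apply (continuous_comp dvphi snd); auto.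
    apply (@continuous_snd R_UniformSpace R_UniformSpace).
  - intros k Hk. unfold v. now rewrite vphi_support.
Qed.

Let ku_C1 : C1_vanishing_ends a b (fun k => k * u k) :=
  C1_vanishing_ends_mul_id a b u C1_vanishing_ends_Re_vphi.
Let mkv_C1 : C1_vanishing_ends a b (fun k => - (k * v k)) :=
  C1_vanishing_ends_opp a b _ (C1_vanishing_ends_mul_id a b v C1_vanishing_ends_Im_vphi).
Let u_cont : forall k, continuous u k :=
  C1_vanishing_ends_continuous a b u C1_vanishing_ends_Re_vphi.
Let v_cont : forall k, continuous v k :=
  C1_vanishing_ends_continuous a b v C1_vanishing_ends_Im_vphi.
Let ku_cont : forall k, continuous (fun k => k * u k) k :=
  C1_vanishing_ends_continuous a b _ ku_C1.
Let mkv_cont : forall k, continuous (fun k => - (k * v k)) k :=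
  C1_vanishing_ends_continuous a b _ mkv_C1.

Lemma phi_eq_wave (t x : R) : phi hbar m vphi t x = Cmult (RtoC c0) (psi t x).
Proof.
  pose proof u_cont. pose proof v_cont.
  set (f := fun k => Cmult (cexpi (phase hbar m t x k)) (vphi k)).
  assert (Hf : @is_RInt C_R_NormedModule f a b (psi t x)).
  { apply (is_RInt_fct_extend_pair f).
    - apply (is_RInt_ext (fun k =>
        plus (cos (phase hbar m t x k) * u k) (- sin (phase hbar m t x k) * v k))).
      { intros k _. unfold f, Cmult, cexpi, plus; simpl. unfold u, v, Re, Im. ring. }
      apply (@is_RInt_plus R_NormedModule); apply is_RInt_osc; auto.
    - apply (is_RInt_ext (fun k =>
        plus (cos (phase hbar m t x k) * v k) (sin (phase hbar m t x k) * u k))).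
      { intros k _. unfold f, Cmult, cexpi, plus; simpl. unfold u, v, Re, Im. ring. }
      apply (@is_RInt_plus R_NormedModule); apply is_RInt_osc; auto. }
  unfold phi. fold f. f_equal.
  rewrite (RInt_gen_supported f a b); auto.
  - now apply (is_RInt_unique (V := C_R_CompleteNormedModule)).
  - intros k Hk. unfold f. rewrite vphi_support by auto.
    unfold Cmult; simpl. apply injective_projections; simpl; ring.
  - now exists (psi t x).
Qed.

Lemma dx_phi_eq_wave (t x : R) : dx_phi hbar m vphi t x = Cmult (RtoC c0) (dpsi t x).
Proof.
  destruct (is_derive_wave_x hbar m a b u v t x u_cont v_cont) as [DRe DIm].
  unfold dx_phi. unfold Cmult at 1, RtoC. f_equal; apply is_derive_unique.
  - apply (is_derive_ext (fun y => c0 * Re (psi t y))).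
    { intro y. rewrite phi_eq_wave. unfold Cmult, RtoC, Re; simpl. ring. }
    replace (fst (c0, 0) * fst (dpsi t x) - snd (c0, 0) * snd (dpsi t x))
      with (c0 * Re (dpsi t x)) by (unfold Re; simpl; ring).
    apply is_derive_scal, DRe.
  - apply (is_derive_ext (fun y => c0 * Im (psi t y))).
    { intro y. rewrite phi_eq_wave. unfold Cmult, RtoC, Im; simpl. ring. }
    replace (fst (c0, 0) * snd (dpsi t x) + snd (c0, 0) * fst (dpsi t x))
      with (c0 * Im (dpsi t x)) by (unfold Im; simpl; ring).
    apply is_derive_scal, DIm.
Qed.

Lemma current_eq_wave (t x : R) :
  current hbar m vphi t x
  = hbar / m * c0 ^ 2 * (Re (psi t x) * Im (dpsi t x) - Im (psi t x) * Re (dpsi t x)).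
Proof.
  unfold current. rewrite phi_eq_wave, dx_phi_eq_wave.
  destruct (psi t x) as [p q], (dpsi t x) as [p' q'].
  unfold Cmult, Cconj, RtoC, Re, Im; simpl. ring.
Qed.

Lemma continuous_current_t (x t : R) : continuous (fun s => current hbar m vphi s x) t.
Proof.
  apply (continuous_ext (fun s => hbar / m * c0 ^ 2 *
    (Re (psi s x) * Im (dpsi s x) - Im (psi s x) * Re (dpsi s x)))).
  { intro s. symmetry. apply current_eq_wave. }
  destruct (continuous_wave_t hbar m a b u v t x u_cont v_cont) as [CRe CIm].
  destruct (continuous_wave_t hbar m a b _ _ t x mkv_cont ku_cont) as [CRe' CIm'].
  apply continuous_Rmult; [apply continuous_const |].
  apply continuous_Rminus; apply continuous_Rmult; auto.
Qed.

Variable tau : R.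
Hypotheses (hbar_gt0 : 0 < hbar) (m_gt0 : 0 < m) (a_gt0 : 0 < a).

Lemma current_decay : exists C, forall M s,
  threshold hbar m b tau <= M -> - M <= s <= tau -> Rabs (current hbar m vphi s M) <= C / M ^ 2.
Proof.
  destruct (wave_decay hbar m a b tau hbar_gt0 m_gt0 a_gt0 a_le_b u v
              C1_vanishing_ends_Re_vphi C1_vanishing_ends_Im_vphi) as [K1 HK1].
  destruct (wave_decay hbar m a b tau hbar_gt0 m_gt0 a_gt0 a_le_b _ _ mkv_C1 ku_C1) as [K2 HK2].
  set (K := Rabs K1 + Rabs K2).
  exists (hbar / m * c0 ^ 2 * (2 * K ^ 2)).
  intros M s HM Hs.
  pose proof (threshold_ge_1_abs_tau hbar m a b tau hbar_gt0 m_gt0 a_gt0 a_le_b).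
  pose proof (Rabs_pos tau).
  assert (HMpos : 0 < M) by lra.
  pose proof (Rle_abs K1). pose proof (Rabs_pos K1).
  pose proof (Rle_abs K2). pose proof (Rabs_pos K2).
  assert (HK1M : K1 / M <= K / M)
    by (apply Rmult_le_compat_r; [left; apply Rinv_0_lt_compat | unfold K]; lra).
  assert (HK2M : K2 / M <= K / M)
    by (apply Rmult_le_compat_r; [left; apply Rinv_0_lt_compat | unfold K]; lra).
  destruct (HK1 M s HM Hs) as [Re1 Im1]. destruct (HK2 M s HM Hs) as [Re2 Im2].
  assert (Hc : 0 <= hbar / m * c0 ^ 2)
    by (apply Rmult_le_pos; [apply Rlt_le, Rdiv_lt_0_compat; lra | apply pow2_ge_0]).
  rewrite current_eq_wave, Rabs_mult, (Rabs_right _ (Rle_ge _ _ Hc)).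
  replace (hbar / m * c0 ^ 2 * (2 * K ^ 2) / M ^ 2) with (hbar / m * c0 ^ 2 * (2 * (K / M) ^ 2))
    by (field; lra).
  apply Rmult_le_compat_l; [exact Hc |].
  apply Rabs_cross_le; [apply (Rle_trans _ _ _ Re1) | apply (Rle_trans _ _ _ Im2)
                       | apply (Rle_trans _ _ _ Im1) | apply (Rle_trans _ _ _ Re2)]; assumption.
Qed.

End WavePacket.

Theorem mainTheorem3 (hbar m a1 a2 : R) (vphi : R -> C) :
  0 < hbar -> 0 < m -> 0 < a1 -> a1 < a2 ->
  (* vphi in C^1(R) *)
  (exists dvphi : R -> C,
      (forall k, @is_derive R_AbsRing C_R_NormedModule vphi k (dvphi k)) /\ (forall k, @continuous R_UniformSpace C_R_NormedModule dvphi k)) ->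
  (* supp vphi ⊆ [a1, a2] *)
  (forall k, k < a1 \/ a2 < k -> vphi k = 0%C) ->
  forall tau : R,
    is_lim (fun M => RInt (fun s => current hbar m vphi s M) (- M) tau) p_infty 0.
Proof.
  intros Hh Hm Ha1 Ha12 [dvphi [Hd Hdc]] Hs tau.
  assert (Hle : a1 <= a2) by lra.
  destruct (current_decay hbar m a1 a2 vphi dvphi Hle Hd Hdc Hs tau Hh Hm Ha1) as [C HC].
  apply (is_lim_RInt_inverse_square _ tau C (threshold hbar m a2 tau)); auto.
  intro M. apply (@ex_RInt_continuous R_CompleteNormedModule). intros s _.
  apply (continuous_current_t hbar m a1 a2 vphi dvphi Hle Hd Hdc Hs).
Qed.
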